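(* Consider companies $i$ with parameters $\pi^0_i,\pi^1_i,\gamma_i>0$, $\mathrm{E}^{\mathrm{bau}}_i=\pi^0_i/\pi^1_i$, $\varrho_i=1/\pi^1_i+1/\gamma_i$, and a penalty $\lambda>0$ with $\lambda\varrho_i<\mathrm{E}^{\mathrm{bau}}_i$ for all $i$. Under the market scheme, for each company $i$: (1) If company $i$ purchases certificates directly at a given spot price $S$, its optimal demand is $\bm{\delta_i}(\bm{P_i}(S))=\bm{\delta_i}(S)=\mathrm{E}^{\mathrm{bau}}_i-S\varrho_i$. (2) If company $i$ purchases through a financial intermediary, then under the feasibility assumption $0<S\le2\lambda-\max_j(\mathrm{E}^{\mathrm{bau}}_j/\varrho_j)$ on the spot price $S$, the intermediated price is $\bm{P_i}(S)=\tfrac12(S+\mathrm{E}^{\mathrm{bau}}_i/\varrho_i)$, and the company's optimal demand at this price is $\bm{\delta_i}(\bm{P_i}(S))=\tfrac12(\mathrm{E}^{\mathrm{bau}}_i-S\varrho_i)$.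
   Context: Company $i$ has raw wealth $\pi_i(q)=\pi^0_iq-\tfrac{\pi^1_i}{2}q^2$, emissions $q$ reduced to $e^{-a}q$ at green cost $\tfrac{\gamma_i}{2}[(1-e^{-a})q]^2$. Facing a certificate price $P$, it maximizes $\pi_i(q)-\tfrac{\gamma_i}{2}[(1-e^{-a})q]^2-\delta P-\lambda(e^{-a}q-\delta)^+$ over $(q,a,\delta)$; its optimal certificate demand is denoted $\bm{\delta_i}(P)$ (equal to $\mathrm{E}^{\mathrm{bau}}_i-P\varrho_i$ for $0<P\le\lambda$). When buying directly at the auction, $\bm{P_i}(S)=S$. When buying through a financial intermediary that buys at spot price $S$, the intermediary sets $\bm{P_i}(S)=\arg\max_{P\in[S,\lambda]}\bm{\delta_i}(P)(P-S)$. *)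

From HB Require Import structures.
From mathcomp Require Import all_boot all_order all_algebra.
From mathcomp Require Import all_classical all_reals all_analysis.
Set Implicit Arguments. Unset Strict Implicit. Unset Printing Implicit Defensive.
Import Order.TTheory GRing.Theory Num.Theory.
Local Open Scope ring_scope.
Local Open Scope classical_set_scope.

Definition wealth (R : realType) (pi0 pi1 q : R) : R :=
  pi0 * q - pi1 / 2 * q ^+ 2.

(* Objective of a company facing certificate price P, with production q,
   abatement a and certificate demand d:
   pi(q) - gamma/2 [(1 - e^{-a}) q]^2 - d P - lam (e^{-a} q - d)^+ *)
Definition company_obj (R : realType) (pi0 pi1 gam lam P q a d : R) : R :=
  wealth pi0 pi1 q - gam / 2 * ((1 - expR (- a)) * q) ^+ 2 - d * P
  - lam * Num.max (expR (- a) * q - d) 0.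

Definition is_opt_demand (R : realType) (pi0 pi1 gam lam P d : R) : Prop :=
  0 <= d /\ exists q a, 0 <= q /\ 0 <= a /\
    forall q' a' d', 0 <= q' -> 0 <= a' -> 0 <= d' ->
      company_obj pi0 pi1 gam lam P q' a' d' <= company_obj pi0 pi1 gam lam P q a d.

(* Optimal certificate demand bm_delta(P): the (largest) optimal demand. *)
Definition opt_demand (R : realType) (pi0 pi1 gam lam P : R) : R :=
  sup [set d | is_opt_demand pi0 pi1 gam lam P d].

Definition Ebau (R : realType) (pi0 pi1 : R) : R := pi0 / pi1.
Definition rho (R : realType) (pi1 gam : R) : R := 1 / pi1 + 1 / gam.

Definition direct_price (R : realType) (S : R) : R := S.

Definition is_intermediated_price (R : realType) (pi0 pi1 gam lam S P : R) : Prop :=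
  S <= P <= lam /\
  forall P', S <= P' <= lam ->
    opt_demand pi0 pi1 gam lam P' * (P' - S) <= opt_demand pi0 pi1 gam lam P * (P - S).

From HB Require Import structures.
From mathcomp Require Import all_boot all_order all_algebra.
From mathcomp Require Import all_classical all_reals all_analysis.
From mathcomp Require Import ring lra.
Import Order.TTheory GRing.Theory Num.Theory.
Local Open Scope ring_scope.

(* Write x = (1 - e^{-a}) q for the abated emissions.  Since P <= lam, buying
   certificates and paying the penalty cost at least P times the residual
   emissions e^{-a} q, so the objective is bounded by the concave quadratic
   pi(q) - gam/2 x^2 - P (q - x), maximal exactly at q = (pi0 - P)/pi1 and
   x = P/gam.  An optimiser must reach this bound, which forces
   d <= q - x = Ebau - P rho, and this demand is itself optimal.  The
   intermediary's revenue (Ebau - P rho)(P - S) is then a concave parabola in P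
   with vertex (S + Ebau/rho)/2, which lies in [S, lam] under the feasibility
   assumption. *)

Lemma pmulr_sqr_le0 {R : realDomainType} (c y : R) :
  0 < c -> (c * y ^+ 2 <= 0) = (y == 0).
Proof. by move=> c_gt0; rewrite pmulr_rle0 // -sqrf_eq0 eq_le sqr_ge0 andbT. Qed.

Lemma sup_max {R : realType} (A : set R) (m : R) :
  A m -> ubound A m -> sup A = m.
Proof.
move=> Am ubm; apply/le_anti/andP; split; first exact: ge_sup (ex_intro _ m Am) ubm.
exact: ub_le_sup (ex_intro _ m ubm) _ Am.
Qed.

Lemma certificate_cost_ge {R : realDomainType} (lam P y d : R) :
  0 <= P <= lam ->
  P * y + P * Num.max (d - y) 0 <= d * P + lam * Num.max (y - d) 0.
Proof.
move=> /andP[P_ge0 P_le_lam]; have [d_le_y | /ltW y_le_d] := leP d y.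
- rewrite (max_r (_ : d - y <= 0)) ?(max_l (_ : 0 <= y - d)) ?subr_le0 ?subr_ge0 //.
  nra.
- rewrite (max_l (_ : 0 <= d - y)) ?(max_r (_ : y - d <= 0)) ?subr_le0 ?subr_ge0 //.
  nra.
Qed.

Section Company.
Context {R : realType} (pi0 pi1 gam lam : R).
Hypotheses (pi1_gt0 : 0 < pi1) (gam_gt0 : 0 < gam).

Let pi1_half_ge0 : 0 <= pi1 / 2. Proof. exact: divr_ge0 (ltW pi1_gt0) (ler0n _ 2). Qed.
Let gam_half_ge0 : 0 <= gam / 2. Proof. exact: divr_ge0 (ltW gam_gt0) (ler0n _ 2). Qed.

Definition opt_output (P : R) : R := (pi0 - P) / pi1.
Definition opt_abatement (P : R) : R := P / gam.
Definition opt_value (P : R) : R :=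
  pi1 / 2 * opt_output P ^+ 2 + gam / 2 * opt_abatement P ^+ 2.
(* The effort a with e^{-a} * opt_output P = opt_output P - opt_abatement P,
   so that the residual emissions are exactly covered by the demand. *)
Definition opt_effort (P : R) : R :=
  ln (opt_output P / (opt_output P - opt_abatement P)).

Lemma profit_square_completion (P q x : R) :
  wealth pi0 pi1 q - gam / 2 * x ^+ 2 - P * (q - x)
  = opt_value P - pi1 / 2 * (q - opt_output P) ^+ 2
    - gam / 2 * (x - opt_abatement P) ^+ 2.
Proof.
rewrite /wealth /opt_value /opt_output /opt_abatement.
by field; rewrite ?lt0r_neq0 ?pnatr_eq0.
Qed.

Lemma opt_output_sub_abatement (P : R) :
  opt_output P - opt_abatement P = Ebau pi0 pi1 - P * rho pi1 gam.
Proof.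
rewrite /opt_output /opt_abatement /Ebau /rho.
by field; rewrite ?lt0r_neq0.
Qed.

Definition obj_gap (P q a d : R) : R :=
  pi1 / 2 * (q - opt_output P) ^+ 2
  + gam / 2 * ((1 - expR (- a)) * q - opt_abatement P) ^+ 2
  + P * Num.max (d - expR (- a) * q) 0.

Lemma obj_gap_ge0 (P q a d : R) : 0 <= P -> 0 <= obj_gap P q a d.
Proof.
by move=> P_ge0; rewrite /obj_gap !addr_ge0 ?(mulr_ge0 pi1_half_ge0 (sqr_ge0 _))
  ?(mulr_ge0 gam_half_ge0 (sqr_ge0 _)) // mulr_ge0 // le_max lexx orbT.
Qed.

Lemma company_obj_le (P q a d : R) : 0 <= P <= lam ->
  company_obj pi0 pi1 gam lam P q a d + obj_gap P q a d <= opt_value P.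
Proof.
move=> P_itv; rewrite /company_obj /obj_gap; set e := expR (- a).
have := certificate_cost_ge _ _ (e * q) d P_itv.
have := profit_square_completion P q ((1 - e) * q).
have -> : q - (1 - e) * q = e * q by ring.
lra.
Qed.

Lemma company_obj_le_opt_value (P q a d : R) : 0 <= P <= lam ->
  company_obj pi0 pi1 gam lam P q a d <= opt_value P.
Proof.
move=> P_itv; have /andP[P_ge0 _] := P_itv.
have := company_obj_le P q a d P_itv; have := obj_gap_ge0 P q a d P_ge0; lra.
Qed.

Lemma obj_gap_le0 (P q a d : R) : 0 < P -> obj_gap P q a d <= 0 ->
  d <= opt_output P - opt_abatement P.
Proof.
move=> P_gt0; rewrite /obj_gap; set e := expR (- a).
set s1 := pi1 / 2 * _; set s2 := gam / 2 * _; set s3 := P * _ => gap_le0.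
have s1_ge0 : 0 <= s1 := mulr_ge0 pi1_half_ge0 (sqr_ge0 _).
have s2_ge0 : 0 <= s2 := mulr_ge0 gam_half_ge0 (sqr_ge0 _).
have s3_ge0 : 0 <= s3 by rewrite mulr_ge0 ?(ltW P_gt0) // le_max lexx orbT.
have : s1 <= 0 by lra.
rewrite pmulr_sqr_le0 ?divr_gt0 // subr_eq0 => /eqP <-.
have : s2 <= 0 by lra.
rewrite pmulr_sqr_le0 ?divr_gt0 // subr_eq0 => /eqP <-.
have : s3 <= 0 by lra.
rewrite pmulr_rle0 // ge_max lexx andbT subr_le0.
by have -> : q - (1 - e) * q = e * q by ring.
Qed.

Section Feasible.
Variable P : R.
Hypotheses (P_gt0 : 0 < P) (P_le_lam : P <= lam).
Hypothesis P_feasible : P * rho pi1 gam < Ebau pi0 pi1.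

Let abatement_gt0 : 0 < opt_abatement P. Proof. by rewrite divr_gt0. Qed.

Let demand_gt0 : 0 < opt_output P - opt_abatement P.
Proof. by rewrite opt_output_sub_abatement subr_gt0. Qed.

Lemma opt_output_gt0 : 0 < opt_output P.
Proof. by rewrite -(subrK (opt_abatement P) (opt_output P)) addr_gt0. Qed.

Lemma opt_effort_ge0 : 0 <= opt_effort P.
Proof.
by rewrite ln_ge0 // ler_pdivlMr // mul1r gerBl (ltW abatement_gt0).
Qed.

Lemma company_obj_opt :
  company_obj pi0 pi1 gam lam P (opt_output P) (opt_effort P)
    (opt_output P - opt_abatement P) = opt_value P.
Proof.
have expR_effort : expR (- opt_effort P) = (opt_output P - opt_abatement P) / opt_output P.
  by rewrite expRN /opt_effort lnK ?invf_div // posrE divr_gt0 ?opt_output_gt0.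
have abated : (1 - expR (- opt_effort P)) * opt_output P = opt_abatement P.
  by rewrite expR_effort mulrBl mul1r divfK ?lt0r_neq0 ?opt_output_gt0 //; ring.
rewrite /company_obj abated expR_effort divfK ?lt0r_neq0 ?opt_output_gt0 //.
rewrite subrr maxxx mulr0 subr0 (mulrC _ P) profit_square_completion.
by rewrite !subrr expr0n /= !mulr0 !subr0.
Qed.

Let P_itv : 0 <= P <= lam. Proof. by rewrite (ltW P_gt0). Qed.

Lemma is_opt_demand_linear :
  is_opt_demand pi0 pi1 gam lam P (Ebau pi0 pi1 - P * rho pi1 gam).
Proof.
rewrite -opt_output_sub_abatement; split; first exact: ltW.
exists (opt_output P), (opt_effort P).
split; first exact/ltW/opt_output_gt0.
split; first exact: opt_effort_ge0.
by move=> q a d _ _ _; rewrite company_obj_opt company_obj_le_opt_value.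
Qed.

Lemma is_opt_demand_le (d : R) : is_opt_demand pi0 pi1 gam lam P d ->
  d <= Ebau pi0 pi1 - P * rho pi1 gam.
Proof.
move=> [_ [q [a [_ [_ qa_opt]]]]].
rewrite -opt_output_sub_abatement; apply: (obj_gap_le0 _ q a) => //.
have := qa_opt _ _ _ (ltW opt_output_gt0) opt_effort_ge0 (ltW demand_gt0).
rewrite company_obj_opt; have := company_obj_le P q a d P_itv; lra.
Qed.

(* At P = lam every d in [0, Ebau - P rho] is optimal, hence the supremum. *)
Lemma opt_demand_linear :
  opt_demand pi0 pi1 gam lam P = Ebau pi0 pi1 - P * rho pi1 gam.
Proof. exact: sup_max is_opt_demand_linear is_opt_demand_le. Qed.

End Feasible.

End Company.

Lemma markup_profit_gap {R : realFieldType} (E r S P : R) : r != 0 ->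
  (E - (S + E / r) / 2 * r) * ((S + E / r) / 2 - S) - (E - P * r) * (P - S)
  = r * (P - (S + E / r) / 2) ^+ 2.
Proof. by move=> r_neq0; field; rewrite r_neq0. Qed.

Lemma linear_markup_argmax {R : realFieldType} (f : R -> R) (E r S lam P : R) :
  0 < r -> S <= (S + E / r) / 2 <= lam ->
  (forall P', S <= P' <= lam -> f P' = E - P' * r) ->
  (S <= P <= lam /\
     forall P', S <= P' <= lam -> f P' * (P' - S) <= f P * (P - S))
  <-> P = (S + E / r) / 2.
Proof.
move=> r_gt0 opt_itv f_linear.
have gap P' : S <= P' <= lam -> f ((S + E / r) / 2) * ((S + E / r) / 2 - S)
    - f P' * (P' - S) = r * (P' - (S + E / r) / 2) ^+ 2.
  by move=> P'_itv; rewrite !f_linear // markup_profit_gap // lt0r_neq0.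
split=> [[P_itv P_max] | ->].
- have := P_max _ opt_itv.
  by rewrite -subr_le0 gap // pmulr_sqr_le0 // subr_eq0 => /eqP.
- split=> // P' P'_itv.
  by rewrite -subr_ge0 gap // mulr_ge0 ?sqr_ge0 ?(ltW r_gt0).
Qed.

Theorem proposition2p6 (R : realType) (n : nat) (pi0 pi1 gam : 'I_n -> R) (lam : R)
  (hpar : forall j, 0 < pi0 j /\ 0 < pi1 j /\ 0 < gam j)
  (hlam : 0 < lam)
  (hfeas : forall j, lam * rho (pi1 j) (gam j) < Ebau (pi0 j) (pi1 j))
  (i : 'I_n) :
  (forall S : R, 0 < S <= lam ->
     opt_demand (pi0 i) (pi1 i) (gam i) lam (direct_price S)
       = opt_demand (pi0 i) (pi1 i) (gam i) lam S /\
     opt_demand (pi0 i) (pi1 i) (gam i) lam S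
       = Ebau (pi0 i) (pi1 i) - S * rho (pi1 i) (gam i)) /\
  (forall S : R, 0 < S ->
     (forall j, S <= 2 * lam - Ebau (pi0 j) (pi1 j) / rho (pi1 j) (gam j)) ->
     (forall P, is_intermediated_price (pi0 i) (pi1 i) (gam i) lam S P <->
        P = (S + Ebau (pi0 i) (pi1 i) / rho (pi1 i) (gam i)) / 2) /\
     opt_demand (pi0 i) (pi1 i) (gam i) lam
        ((S + Ebau (pi0 i) (pi1 i) / rho (pi1 i) (gam i)) / 2)
       = (Ebau (pi0 i) (pi1 i) - S * rho (pi1 i) (gam i)) / 2).
Proof.
have [_ [pi1_gt0 gam_gt0]] := hpar i; have lam_feasible := hfeas i.
set E := Ebau _ _ in lam_feasible *; set r := rho _ _ in lam_feasible *.
have r_gt0 : 0 < r by rewrite addr_gt0 // div1r invr_gt0.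
have demand P : 0 < P -> P <= lam -> opt_demand (pi0 i) (pi1 i) (gam i) lam P = E - P * r.
  move=> P_gt0 P_le_lam; apply: opt_demand_linear => //.
  by apply: le_lt_trans lam_feasible; rewrite ler_pM2r.
split=> [S /andP[S_gt0 S_le_lam] | S S_gt0 S_le]; first by split; last exact: demand.
have lam_lt : lam < E / r by rewrite ltr_pdivlMr.
have := S_le i; rewrite -/E -/r => S_le_i.
split=> [P | ]; last by rewrite demand; [field; rewrite lt0r_neq0 | lra | lra].
apply: linear_markup_argmax => [// | | P' /andP[S_le_P' P'_le_lam]].
- apply/andP; split; lra.
- apply: demand => //; lra.
Qed.
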